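(* Let $m,n,r$ be positive integers. There exists an edge coloring of $\Gamma_{m,n}$ with $r$ colors containing no alternating rectangle if and only if there are edge colorings $c_1,\dots,c_m$ of the complete graph $K_n$, each with $r$ colors, such that $\chi(\mathcal{G}(c_i,c_j))\le r$ for all pairs of indices $i,j$.
   Context: The grid graph $\Gamma_{m,n}$ is the graph on vertex set $[m]\times[n]$ in which distinct vertices $(i,j),(i',j')$ are adjacent iff $i=i'$ or $j=j'$. A rectangle is the induced subgraph on $\{(i,j),(i',j),(i,j'),(i',j')\}$ with $i<i'$, $j<j'$; in an edge coloring it is alternating if $\{(i,j),(i',j)\}$ and $\{(i,j'),(i',j')\}$ have the same color and $\{(i,j),(i,j')\}$ and $\{(i',j),(i',j')\}$ have the same color. For two edge colorings $c_1,c_2$ of $K_n$, $\mathcal{G}(c_1,c_2)$ is the spanning subgraph of $K_n$ consisting of the edges $e$ with $c_1(e)=c_2(e)$; $\chi$ denotes chromatic number. *)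

From mathcomp Require Import all_boot.
Set Implicit Arguments. Unset Strict Implicit. Unset Printing Implicit Defensive.

(* An edge coloring of a (simple) graph on a finite vertex type V with r colors
   is a map from edges, i.e. 2-element vertex sets [set x; y], to 'I_r.
   We represent it as a function {set V} -> 'I_r; only its values on the
   edges of the graph are ever used. *)
Definition edge_coloring (V : finType) (r : nat) := {set V} -> 'I_r.

Definition colorable (V : finType) (adj : rel V) (k : nat) : bool :=
  [exists f : {ffun V -> 'I_k}, [forall x, forall y, adj x y ==> (f x != f y)]].

Lemma colorable_card (V : finType) (adj : rel V) (irr : irreflexive adj) :
  exists k, colorable adj k.
Proof.
exists #|V|; apply/existsP; exists [ffun x => enum_rank x].
apply/forallP => x; apply/forallP => y; apply/implyP => hxy.
rewrite !ffunE; apply/negP => /eqP /enum_rank_inj exy.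
by move: hxy; rewrite exy irr.
Qed.

Definition agree_graph (n r : nat) (c1 c2 : edge_coloring 'I_n r) : rel 'I_n :=
  fun x y => (x != y) && (c1 [set x; y] == c2 [set x; y]).

Lemma agree_graph_irr n r (c1 c2 : edge_coloring 'I_n r) :
  irreflexive (agree_graph c1 c2).
Proof. by move=> x; rewrite /agree_graph eqxx. Qed.

Definition chromatic_number (V : finType) (adj : rel V)
  (irr : irreflexive adj) : nat := ex_minn (colorable_card irr).

Definition chi_agree n r (c1 c2 : edge_coloring 'I_n r) : nat :=
  chromatic_number (agree_graph_irr c1 c2).

(* Edge colorings of the grid graph Gamma_{m,n} on 'I_m * 'I_n: edges are
   {(i,j),(i',j)} (i<>i') and {(i,j),(i,j')} (j<>j'). *)
Definition alternating_rectangle (m n r : nat) (c : edge_coloring (prod 'I_m 'I_n) r)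
  (i i' : 'I_m) (j j' : 'I_n) : bool :=
  (c [set (i, j); (i', j)] == c [set (i, j'); (i', j')]) &&
  (c [set (i, j); (i, j')] == c [set (i', j); (i', j')]).

Definition no_alternating_rectangle (m n r : nat)
  (c : edge_coloring (prod 'I_m 'I_n) r) : Prop :=
  forall (i i' : 'I_m) (j j' : 'I_n), i < i' -> j < j' ->
    ~~ alternating_rectangle c i i' j j'.

From mathcomp Require Import all_boot.
Set Implicit Arguments. Unset Strict Implicit. Unset Printing Implicit Defensive.

(* Restricting a grid coloring to two rows i, i' gives two colorings of K_n
   (the rows), and the colors of the vertical edges {(i,j),(i',j)} form a
   vertex coloring of K_n.  A rectangle on rows i, i' and columns j, j' is
   alternating exactly when the rows agree on {j,j'} and the vertical edges at
   j and j' get the same color, i.e. when the vertical coloring fails to be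
   proper on the edge jj' of G(row i, row i').  Conversely, given row
   colorings and proper r-colorings of all graphs G(c_i, c_j), coloring each
   vertical edge by the proper coloring of its pair of rows yields a grid
   coloring without alternating rectangles. *)

Lemma imset_set2 (aT rT : finType) (f : aT -> rT) (a b : aT) :
  f @: [set a; b] = [set f a; f b].
Proof. by rewrite imsetU1 imset_set1. Qed.

Lemma pick_set1 (T : finType) (x : T) : [pick y in [set x]] = Some x.
Proof. by case: pickP => [y /set1P -> //|/(_ x)]; rewrite inE eqxx. Qed.

Section ProperColoring.

Variables (V : finType) (adj : rel V).

Definition proper_coloring (k : nat) (f : V -> 'I_k) : bool :=
  [forall x, forall y, adj x y ==> (f x != f y)].

Lemma proper_coloringP k (f : V -> 'I_k) :
  reflect (forall x y, adj x y -> f x != f y) (proper_coloring f).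
Proof.
apply: (iffP forallP) => [hf x y | hf x]; first by move/forallP/(_ y)/implyP: (hf x).
by apply/forallP => y; apply/implyP/hf.
Qed.

Lemma proper_colorable k (f : V -> 'I_k) : proper_coloring f -> colorable adj k.
Proof.
move/proper_coloringP => hf; apply/existsP; exists (finfun f).
by apply/proper_coloringP => x y; rewrite !ffunE; apply: hf.
Qed.

Lemma colorable_widen k k' : k <= k' -> colorable adj k -> colorable adj k'.
Proof.
move=> le_kk' /existsP [f /proper_coloringP hf].
apply: (@proper_colorable _ (widen_ord le_kk' \o f)); apply/proper_coloringP.
by move=> x y /hf; apply: contra => /eqP [] /val_inj ->.
Qed.

Lemma chromatic_number_le (irr : irreflexive adj) k :
  (chromatic_number irr <= k) = colorable adj k.
Proof.
rewrite /chromatic_number; case: ex_minnP => chi col_chi min_chi.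
apply/idP/idP => [le_chi_k | /min_chi //].
exact: colorable_widen le_chi_k col_chi.
Qed.

End ProperColoring.

Lemma agree_graphC n r (c1 c2 : edge_coloring 'I_n r) :
  agree_graph c1 c2 =2 agree_graph c2 c1.
Proof. by move=> x y; rewrite /agree_graph (eq_sym (c1 _)). Qed.

Section Rectangles.

Variables (m n r : nat) (c : edge_coloring (prod 'I_m 'I_n) r).

Lemma alternating_rectangle_rowsC i i' j j' :
  alternating_rectangle c i' i j j' = alternating_rectangle c i i' j j'.
Proof.
rewrite /alternating_rectangle (setUC [set (i', j)]) (setUC [set (i', j')]).
by rewrite (eq_sym (c [set (i', j); _])).
Qed.

Lemma alternating_rectangle_colsC i i' j j' :
  alternating_rectangle c i i' j' j = alternating_rectangle c i i' j j'.
Proof.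
rewrite /alternating_rectangle (eq_sym (c [set (i, j'); _])).
by rewrite (setUC [set (i, j')] [set (i, j)]) (setUC [set (i', j')] [set (i', j)]).
Qed.

Lemma no_alternating_rectangle_neq :
  no_alternating_rectangle c -> forall i i' j j', i != i' -> j != j' ->
  ~~ alternating_rectangle c i i' j j'.
Proof.
move=> noalt i i' j j'.
wlog lt_ii' : i i' / i < i'.
  move=> hwlog; case: (ltngtP i i') => [/hwlog //|/hwlog h|/val_inj ->];
    last by rewrite eqxx.
  by rewrite eq_sym -alternating_rectangle_rowsC.
wlog lt_jj' : j j' / j < j'.
  move=> hwlog; case: (ltngtP j j') => [/hwlog //|/hwlog h|/val_inj ->];
    last by rewrite eqxx.
  by rewrite (eq_sym j) -alternating_rectangle_colsC.
by move=> _ _; apply: noalt.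
Qed.

Definition grid_row (i : 'I_m) : edge_coloring 'I_n r :=
  fun S => c [set (i, j) | j in S].

Definition grid_column (i i' : 'I_m) (j : 'I_n) : 'I_r := c [set (i, j); (i', j)].

Lemma grid_column_proper i i' :
  no_alternating_rectangle c -> i != i' ->
  proper_coloring (agree_graph (grid_row i) (grid_row i')) (grid_column i i').
Proof.
move=> noalt neq_ii'; apply/proper_coloringP => j j'.
rewrite /agree_graph /grid_row !imset_set2 => /andP [neq_jj' /eqP rows_agree].
apply: contra (no_alternating_rectangle_neq noalt neq_ii' neq_jj') => cols_agree.
by rewrite /alternating_rectangle cols_agree rows_agree eqxx.
Qed.

End Rectangles.

Section GridColoring.

Variables (m n r : nat) (d0 : 'I_r) (cs : 'I_m -> edge_coloring 'I_n r).

(* Quantifying over both orders makes the chosen coloring depend only on the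
   unordered pair of rows, which is all that a vertical edge determines. *)
Definition proper_on_pairs (T : {set 'I_m}) (f : 'I_n -> 'I_r) : bool :=
  [forall i in T, forall i' in T,
     (i != i') ==> proper_coloring (agree_graph (cs i) (cs i')) f].

Definition pair_coloring (T : {set 'I_m}) : 'I_n -> 'I_r :=
  if [pick f : {ffun 'I_n -> 'I_r} | proper_on_pairs T f] is Some f then f
  else fun=> d0.

Lemma pair_coloring_proper i i' :
  colorable (agree_graph (cs i) (cs i')) r -> i != i' ->
  proper_coloring (agree_graph (cs i) (cs i')) (pair_coloring [set i; i']).
Proof.
move=> /existsP [f f_proper] neq_ii'; rewrite /pair_coloring.
case: pickP => [g /forall_inP g_proper | no_pick].
  have /forall_inP g_proper_i := g_proper i (setU11 _ _).
  have i'_in : i' \in [set i; i'] by rewrite !inE eqxx orbT.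
  by move/implyP: (g_proper_i i' i'_in); apply.
have f_proper' : proper_coloring (agree_graph (cs i') (cs i)) f.
  by apply/proper_coloringP => x y; rewrite agree_graphC; apply/proper_coloringP.
suff : proper_on_pairs [set i; i'] f by rewrite no_pick.
apply/forall_inP => a; rewrite !inE => /orP [] /eqP ->;
  apply/forall_inP => b; rewrite !inE => /orP [] /eqP ->;
  by rewrite ?eqxx ?f_proper ?f_proper' ?neq_ii' // eq_sym neq_ii'.
Qed.

(* An edge S of the grid lies in one row iff its projection to 'I_m is a
   singleton; otherwise it is vertical and its projection to 'I_n is one
   column. *)
Definition grid_coloring : edge_coloring (prod 'I_m 'I_n) r := fun S =>
  match [pick i in fst @: S], [pick j in snd @: S] with
  | Some i, Some j =>
      if #|fst @: S| == 1 then cs i (snd @: S) else pair_coloring (fst @: S) j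
  | _, _ => d0
  end.

Lemma grid_coloring_row i j j' :
  grid_coloring [set (i, j); (i, j')] = cs i [set j; j'].
Proof.
rewrite /grid_coloring !imset_set2 /= setUid pick_set1 cards1 eqxx.
by case: pickP => // /(_ j); rewrite !inE eqxx.
Qed.

Lemma grid_coloring_column i i' j : i != i' ->
  grid_coloring [set (i, j); (i', j)] = pair_coloring [set i; i'] j.
Proof.
move=> neq_ii'; rewrite /grid_coloring !imset_set2 /= setUid pick_set1 cards2 neq_ii'.
by case: pickP => // /(_ i); rewrite !inE eqxx.
Qed.

Lemma grid_coloring_no_alternating :
  (forall i i', i != i' -> colorable (agree_graph (cs i) (cs i')) r) ->
  no_alternating_rectangle grid_coloring.
Proof.
move=> col i i' j j' lt_ii' lt_jj'; have neq_ii' : i != i' by rewrite neq_ltn lt_ii'.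
rewrite /alternating_rectangle !grid_coloring_row !grid_coloring_column //.
apply/negP => /andP [/eqP cols_agree /eqP rows_agree].
move/proper_coloringP: (pair_coloring_proper (col _ _ neq_ii') neq_ii') => /(_ j j').
by rewrite /agree_graph rows_agree eqxx neq_ltn lt_jj' cols_agree eqxx => /(_ isT).
Qed.

End GridColoring.

Theorem lemma3p1 (m n r : nat) (hm : 0 < m) (hn : 0 < n) (hr : 0 < r) :
  (exists c : edge_coloring (prod 'I_m 'I_n) r, no_alternating_rectangle c) <->
  (exists cs : 'I_m -> edge_coloring 'I_n r,
     forall i j : 'I_m, i != j -> chi_agree (cs i) (cs j) <= r).
Proof.
split=> [[c noalt] | [cs chi_le]].
  exists (grid_row c) => i i' neq_ii'.
  by rewrite /chi_agree chromatic_number_le; apply/proper_colorable/grid_column_proper.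
exists (grid_coloring (Ordinal hr) cs); apply: grid_coloring_no_alternating => i i' neq_ii'.
by move: (chi_le _ _ neq_ii'); rewrite /chi_agree chromatic_number_le.
Qed.
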